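(* Let $N_1,\dots,N_R$ be produced by the tree-based resampling algorithm described in the context with probabilities $\pi_1,\dots,\pi_R$ and $N$ particles. Then for every $\varepsilon>0$, $$\sup_{A\subset\{1,\dots,R\}}\mathbf P\Big[\Big|\sum_{j\in A}(N_j-N\pi_j)\Big|\ge\varepsilon\Big]\le2\exp(-4\varepsilon^2/R).$$
   Context: Tree-based resampling: given probabilities $\pi_1,\dots,\pi_R$ and $N\in\mathbb N$, fix an arbitrary binary tree with $R$ leaves labelled $1,\dots,R$; identify each node $\alpha$ with the set of leaves below it and put $\mu_\alpha=N\sum_{j\in\alpha}\pi_j$. $N$ particles start at the root and are propagated down: for each node $\alpha$ the number $N_\alpha$ of particles passing through $\alpha$ satisfies $N_\alpha\in\{\lfloor\mu_\alpha\rfloor,\lfloor\mu_\alpha\rfloor+1\}$ and $\mathbf E[N_\alpha]=\mu_\alpha$; at each internal node the split of the arriving particles between its two children is either deterministic or a random choice between two possibilities with given probabilities, and the random choices at different nodes are made independently. $N_j$ is the number of particles ending at leaf $j$. *)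

From HB Require Import structures.
From mathcomp Require Import all_boot all_order all_algebra.
From mathcomp Require Import reals.
From mathcomp.analysis Require Import sequences exp.
From Stdlib Require List.
Set Implicit Arguments. Unset Strict Implicit. Unset Printing Implicit Defensive.
Import Order.TTheory GRing.Theory Num.Theory.
Local Open Scope ring_scope.

(* The rule [s : nat -> nat * nat * rT] of a node
   says: if [n] particles arrive at the node, then with probability [q]
   the left child receives [minn a n] particles (and the right child the
   remaining [n - minn a n]), and with probability [1 - q] the left child
   receives [minn b n] (and the right child the rest), where
   [s n = (a, b, q)].  A deterministic split is the case a = b (or q = 1).
   The [minn] only ensures that particles are conserved. *)
Inductive rtree (rT : Type) (R : nat) :=
| RLeaf of 'I_R
| RNode of (nat -> nat * nat * rT) & rtree rT R & rtree rT R.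

Arguments RLeaf {rT R}.
Arguments RNode {rT R}.

Section Resampling.
Variables (rT : realType) (R : nat).

(* leaves below a node (the node is identified with this set of leaves) *)
Fixpoint leaves (t : rtree rT R) : seq 'I_R :=
  match t with
  | RLeaf j => [:: j]
  | RNode _ l r => leaves l ++ leaves r
  end.

Fixpoint subtrees (t : rtree rT R) : seq (rtree rT R) :=
  t :: match t with
       | RLeaf _ => [::]
       | RNode _ l r => subtrees l ++ subtrees r
       end.

Fixpoint rules_ok (t : rtree rT R) : Prop :=
  match t with
  | RLeaf _ => True
  | RNode s l r => (forall n, 0 <= (s n).2 <= 1) /\ rules_ok l /\ rules_ok r
  end.

Definition outcome := {ffun 'I_R -> nat}.

(* Law of the vector (N_j)_j of leaf counts when [n] particles enter the
   (sub)tree [t], as a finite list of (probability, outcome) pairs.  The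
   random choices at different nodes are independent: the two subtrees
   below a node are run independently given the split. *)
Fixpoint dist (t : rtree rT R) (n : nat) : seq (rT * outcome) :=
  match t with
  | RLeaf j => [:: (1, [ffun i => if i == j then n else 0%N])]
  | RNode s l r =>
      let: (a, b, q) := s n in
      [seq (q * x.1 * y.1, [ffun i => (x.2 i + y.2 i)%N])
         | x : rT * outcome <- dist l (minn a n), y : rT * outcome <- dist r (n - minn a n)] ++
      [seq ((1 - q) * x.1 * y.1, [ffun i => (x.2 i + y.2 i)%N])
         | x : rT * outcome <- dist l (minn b n), y : rT * outcome <- dist r (n - minn b n)]
  end.

Definition Prob (d : seq (rT * outcome)) (E : pred outcome) : rT :=
  \sum_(x <- d | E x.2) x.1.

Definition Expect (d : seq (rT * outcome)) (X : outcome -> rT) : rT :=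
  \sum_(x <- d) x.1 * X x.2.

Definition Nnode (alpha : rtree rT R) (x : outcome) : nat :=
  (\sum_(j <- leaves alpha) x j)%N.

Definition mu (N : nat) (pi : 'I_R -> rT) (alpha : rtree rT R) : rT :=
  N%:R * \sum_(j <- leaves alpha) pi j.

Definition tree_resampling (N : nat) (pi : 'I_R -> rT) (t : rtree rT R) : Prop :=
  [/\ perm_eq (leaves t) (enum 'I_R),
      rules_ok t &
      forall alpha, List.In alpha (subtrees t) ->
        (forall x, x \in dist t N -> 0 < x.1 ->
           ((Nnode alpha x.2)%:Z == Num.floor (mu N pi alpha))
           || ((Nnode alpha x.2)%:Z == Num.floor (mu N pi alpha) + 1))
        /\ Expect (dist t N) (fun x => (Nnode alpha x)%:R) = mu N pi alpha].

End Resampling.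

(* Write P_j = N pi_j - floor (N pi_j) for the fractional parts.  The leaf
   counts are negatively dependent: when all w_j lie on the same side of 1,
   E[prod_j w_j^N_j] <= prod_j E[w_j^(floor (N pi_j) + B_j)] for independent
   Bernoulli variables B_j of means P_j.  This goes by induction on the tree,
   for an arbitrary mixture of admissible particle counts at the root: at a
   node the counts of the two children lie in {F, F + 1} and their sum in
   {F, F + 1}, so two possible splits are never strictly concordant and
   Chebyshev's sum inequality decouples the children.  With w_j = e^l on A,
   Hoeffding's lemma bounds E[exp (l D_A)] by exp (|A| l^2 / 8), where D_A is
   the deviation on A.  As D_A = - D_(complement of A), one may assume
   |A| <= R / 2, and the Chernoff bound at l = 8 eps / R gives the claim. *)

From Pilot Require Import Defs.
From HB Require Import structures.
From mathcomp Require Import all_boot all_order all_algebra.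
From mathcomp Require Import reals ring lra zify.
From mathcomp Require Import functions topology normedtype derive.
From mathcomp Require Import realfun sequences exp.
From Stdlib Require List.
Set Implicit Arguments. Unset Strict Implicit. Unset Printing Implicit Defensive.
Import Order.TTheory GRing.Theory Num.Theory.
Import numFieldNormedType.Exports.
Local Open Scope ring_scope.

Section DeriveSign.
Variables (R : realType) (f df : R -> R).
Hypothesis f_df : forall x : R, is_derive x (1 : R) f (df x).

Let f_cont : continuous f.
Proof. by move=> x; apply/differentiable_continuous/derivable1_diffP/ex_derive. Qed.

Let derive1_f x : derive1 f x = df x.
Proof. by rewrite derive1E derive_val. Qed.

Lemma derive_ge0_homo : (forall x, 0 <= df x) -> {homo f : x y / x <= y}.
Proof.
move=> df_ge0 x y xy; apply: (@ger0_derive1_le_cc R f x y) => //.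
- by move=> z _; rewrite derive1_f.
- exact: continuous_subspaceT.
- by rewrite in_itv /= lexx xy.
- by rewrite in_itv /= lexx xy.
Qed.

Lemma derive_sign_max (c : R) :
  (forall x, x <= c -> 0 <= df x) -> (forall x, c <= x -> df x <= 0) ->
  forall x, f x <= f c.
Proof.
move=> df_left df_right x; have [xc|cx] := lerP x c.
  apply: (@ger0_derive1_le_cc R f x c) => //; last 3 first.
  - exact: continuous_subspaceT.
  - by rewrite in_itv /= lexx xc.
  - by rewrite in_itv /= lexx xc.
  by move=> z; rewrite in_itv /= derive1_f => /andP[_ /ltW]; apply: df_left.
apply: (@ler0_derive1_le_cc R f c x) => //; last 4 first.
- exact: continuous_subspaceT.
- by rewrite in_itv /= lexx ltW.
- by rewrite in_itv /= lexx ltW.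
- exact: ltW.
by move=> z; rewrite in_itv /= derive1_f => /andP[/ltW + _]; apply: df_right.
Qed.

End DeriveSign.

Section Hoeffding.
Variables (R : realType) (p : R).
Hypothesis p01 : 0 <= p <= 1.

Let D : R -> R := fun y => 1 - p + p * expR y.

Let D_gt0 y : 0 < D y.
Proof.
have e_gt0 := expR_gt0 y; case/andP: p01 => p_ge0 p_le1.
by have := mulr_ge0 p_ge0 (ltW e_gt0); rewrite /D; nra.
Qed.

Let is_derive_D (x : R) : is_derive x (1 : R) D (p * expR x).
Proof.
have := is_deriveD (is_derive_cst (1 - p) x 1) (is_deriveZ p (is_derive_expR x)).
by rewrite add0r.
Qed.

(* [D y * expR (g y)] below is [exp (- k y)] for
   [k y := p y + y^2/8 - ln (D y)], and [m = k'], with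
   [k'' = 1/4 - p (1 - p) e^y / D(y)^2 >= 0] by AM-GM. *)
Let m (y : R) := 4^-1 * y - (1 - p) + (1 - p) * (D y)^-1.

Let is_derive_m (x : R) :
  is_derive x (1 : R) m (4^-1 + (1 - p) * (- (D x) ^- 2 * (p * expR x))).
Proof.
have dV := is_deriveV (lt0r_neq0 (D_gt0 x)) (is_derive_D x).
have := is_deriveD (is_deriveB (is_deriveZ (4^-1 : R) (is_derive_id x 1))
                              (is_derive_cst (1 - p) x 1))
                   (is_deriveZ (1 - p) dV).
by move/is_derive_eq; apply; rewrite /GRing.scale /= mulr1 subr0.
Qed.

Let m_homo : {homo m : x y / x <= y}.
Proof.
apply: derive_ge0_homo is_derive_m _ => x.
have D_pos := D_gt0 x; have e_gt0 := expR_gt0 x; case/andP: p01 => p0 p1.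
have amgm : 4 * (1 - p) * (p * expR x) <= D x ^+ 2.
  by have := sqr_ge0 (1 - p - p * expR x); rewrite /D; nra.
have -> : 4^-1 + (1 - p) * (- D x ^- 2 * (p * expR x)) =
    (D x ^+ 2 - 4 * (1 - p) * (p * expR x)) / (4 * D x ^+ 2).
  by field; rewrite gt_eqF.
by rewrite divr_ge0 ?subr_ge0 // mulr_ge0 // exprn_ge0 // ltW.
Qed.

Let m0 : m 0 = 0.
Proof. by rewrite /m /D expR0 mulr1 subrK invr1; ring. Qed.

Let g : R -> R := fun y => - (p * y) - 8^-1 * (y * y).

Let is_derive_D_expg (x : R) :
  is_derive x (1 : R) (fun y => D y * expR (g y)) (- D x * m x * expR (g x)).
Proof.
have dg : is_derive x 1 g (- (p * 1) - 8^-1 * (x *: 1 + x *: 1)).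
  exact: is_deriveB (is_deriveN (is_deriveZ p (is_derive_id x 1)))
                    (is_deriveZ (8^-1 : R) (is_deriveM (is_derive_id x 1) (is_derive_id x 1))).
have dDg := is_deriveM (is_derive_D x) (is_derive1_comp (is_derive_expR (g x)) dg).
have -> : (fun y => D y * expR (g y)) = (D * (expR \o g))%R by [].
apply: (is_derive_eq dDg); rewrite /m /GRing.scale /=.
have := D_gt0 x; rewrite /D => D_pos.
by field; rewrite gt_eqF.
Qed.

Lemma hoeffding_bernoulli (l : R) :
  expR (- (p * l)) * (1 - p + p * expR l) <= expR (l ^+ 2 / 8).
Proof.
have h_max : D l * expR (g l) <= D 0 * expR (g 0).
  apply: (derive_sign_max is_derive_D_expg) => x x0; rewrite -mulrA mulNr.
    rewrite oppr_ge0 pmulr_rle0 ?D_gt0 // pmulr_lle0 ?expR_gt0 //.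
    by rewrite -m0 m_homo.
  rewrite oppr_le0 pmulr_rge0 ?D_gt0 // pmulr_lge0 ?expR_gt0 //.
  by rewrite -m0 m_homo.
move: h_max; rewrite /D /g expR0 !mulr0 mulr1 subr0 oppr0 expR0 mulr1 subrK.
have -> : - (p * l) - 8^-1 * (l * l) = - (p * l) - l ^+ 2 / 8 by rewrite expr2; field.
rewrite expRD mulrA [expR (- (_ / 8))]expRN ler_pdivrMr ?expR_gt0 // mul1r.
by rewrite mulrC.
Qed.

End Hoeffding.

Section FiniteLaws.
Variable rT : realType.

(* Finite laws are weighted lists, as [dist] in Defs; [wbind] is the bind of
   the finite-measure monad. *)
Definition wsum (T : Type) (d : seq (rT * T)) (f : T -> rT) : rT :=
  \sum_(x <- d) x.1 * f x.2.

Definition wbind (T U : Type) (d : seq (rT * T)) (k : T -> seq (rT * U)) :=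
  flatten [seq [seq (x.1 * y.1, y.2) | y <- k x.2] | x <- d].

Definition wmap (T U : Type) (h : T -> U) (d : seq (rT * T)) :=
  [seq (x.1, h x.2) | x <- d].

Definition is_law (T : eqType) (d : seq (rT * T)) :=
  (forall x, x \in d -> 0 <= x.1) /\ wsum d (fun=> 1) = 1.

Let weight_eq0 (w : rT) : 0 <= w -> w <= 0 -> w = 0.
Proof. by move=> w_ge0 w_le0; apply/eqP; rewrite eq_le w_le0. Qed.

Lemma ExpectE (R : nat) (d : seq (rT * outcome R)) X : Expect d X = wsum d X.
Proof. by []. Qed.

Lemma eq_wsum (T : Type) (d : seq (rT * T)) f g : f =1 g -> wsum d f = wsum d g.
Proof. by move=> fg; apply: eq_bigr => x _; rewrite fg. Qed.

Lemma wsumZ (T : Type) (d : seq (rT * T)) (b : rT) f :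
  wsum d (fun t => b * f t) = b * wsum d f.
Proof. by rewrite /wsum mulr_sumr; apply: eq_bigr => x _; rewrite mulrCA. Qed.

Lemma wsumD (T : Type) (d : seq (rT * T)) f g :
  wsum d (fun t => f t + g t) = wsum d f + wsum d g.
Proof. by rewrite /wsum -big_split; apply: eq_bigr => x _; rewrite mulrDr. Qed.

Lemma wsumB (T : Type) (d : seq (rT * T)) f g :
  wsum d (fun t => f t - g t) = wsum d f - wsum d g.
Proof. by rewrite /wsum -sumrB; apply: eq_bigr => x _; rewrite mulrBr. Qed.

Lemma wsum_cst (T : Type) (d : seq (rT * T)) (c : rT) :
  wsum d (fun=> c) = c * wsum d (fun=> 1).
Proof. by rewrite -wsumZ; apply: eq_wsum => t; rewrite mulr1. Qed.

Lemma wsum_bind (T U : Type) (d : seq (rT * T)) (k : T -> seq (rT * U)) f :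
  wsum (wbind d k) f = wsum d (fun t => wsum (k t) f).
Proof.
rewrite /wsum /wbind big_flatten big_map; apply: eq_bigr => x _.
by rewrite big_map mulr_sumr; apply: eq_bigr => y _; rewrite mulrA.
Qed.

Lemma wsum_map (T U : Type) (h : T -> U) (d : seq (rT * T)) f :
  wsum (wmap h d) f = wsum d (f \o h).
Proof. by rewrite /wsum big_map. Qed.

Lemma mem_wbind (T U : eqType) (d : seq (rT * T)) (k : T -> seq (rT * U)) z :
  z \in wbind d k -> exists2 x, x \in d & exists2 y, y \in k x.2 & z = (x.1 * y.1, y.2).
Proof. by case/flatten_mapP => x xd /mapP[y yk ->]; exists x => //; exists y. Qed.

Lemma wbind_mem (T U : eqType) (d : seq (rT * T)) (k : T -> seq (rT * U)) x y :
  x \in d -> y \in k x.2 -> (x.1 * y.1, y.2) \in wbind d k.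
Proof. by move=> xd yk; apply/flatten_mapP; exists x => //; apply: map_f. Qed.

Lemma mem_wbind_pos (T U : eqType) (d : seq (rT * T)) (k : T -> seq (rT * U)) z :
  (forall x, x \in d -> 0 <= x.1) -> z \in wbind d k -> 0 < z.1 ->
  exists2 x, x \in d /\ 0 < x.1 & exists2 y, y \in k x.2 /\ 0 < y.1 & z = (x.1 * y.1, y.2).
Proof.
move=> d_ge0 /mem_wbind[x xd [y yk ->]] /= xy_pos.
have x_pos : 0 < x.1.
  by rewrite lt_def (d_ge0 x xd) andbT; apply: contraTneq xy_pos => ->; rewrite mul0r ltxx.
by exists x => //; exists y => //; rewrite -(pmulr_rgt0 _ x_pos).
Qed.

Lemma is_law_bind (T U : eqType) (d : seq (rT * T)) (k : T -> seq (rT * U)) :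
  is_law d -> (forall x, x \in d -> is_law (k x.2)) -> is_law (wbind d k).
Proof.
move=> [d_ge0 d_mass] k_law; split.
  move=> z /mem_wbind[x xd [y yk ->]].
  by rewrite mulr_ge0 ?d_ge0 //; case: (k_law x xd) => + _; apply.
rewrite wsum_bind -[RHS]d_mass; apply: eq_big_seq => x xd.
by congr (_ * _); case: (k_law x xd).
Qed.

Lemma is_law_map (T U : eqType) (h : T -> U) (d : seq (rT * T)) :
  is_law d -> is_law (wmap h d).
Proof.
move=> [d_ge0 d_mass]; split; last by rewrite wsum_map.
by move=> z /mapP[x xd ->]; apply: d_ge0.
Qed.

Lemma eq_wsum_pos (T : eqType) (d : seq (rT * T)) f g :
  (forall x, x \in d -> 0 <= x.1) ->
  (forall x, x \in d -> 0 < x.1 -> f x.2 = g x.2) -> wsum d f = wsum d g.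
Proof.
move=> d_ge0 fg; rewrite /wsum !big_seq; apply: eq_bigr => x xd.
have [x_pos|/(weight_eq0 (d_ge0 x xd)) ->] := ltrP 0 x.1; first by rewrite fg.
by rewrite !mul0r.
Qed.

Lemma wsum_ge0_pos (T : eqType) (d : seq (rT * T)) f :
  (forall x, x \in d -> 0 <= x.1) ->
  (forall x, x \in d -> 0 < x.1 -> 0 <= f x.2) -> 0 <= wsum d f.
Proof.
move=> d_ge0 f_ge0; rewrite /wsum big_seq; apply: sumr_ge0 => x xd.
have [x_pos|/(weight_eq0 (d_ge0 x xd)) ->] := ltrP 0 x.1; last by rewrite mul0r.
by rewrite mulr_ge0 ?f_ge0 // ltW.
Qed.

Lemma has_pos_weight (T : eqType) (d : seq (rT * T)) :
  wsum d (fun=> 1) = 1 -> exists2 x, x \in d & 0 < x.1.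
Proof.
move=> mass1.
suff /hasP[x xd x_pos] : has (fun x : rT * T => 0 < x.1) d by exists x.
apply: contraT => /hasPn d_le0; have : wsum d (fun=> 1) <= 0.
  by rewrite /wsum big_seq; apply: sumr_le0 => x xd; rewrite mulr1 leNgt d_le0.
by rewrite mass1 ler10.
Qed.

Lemma wsum_subE (T U : Type) (d : seq (rT * T)) (e : seq (rT * U)) f g :
  wsum d (fun=> 1) = 1 -> wsum e (fun=> 1) = 1 ->
  wsum d (fun t => wsum e (fun u => f t - g u)) = wsum d f - wsum e g.
Proof.
move=> d_mass e_mass; under eq_wsum => t do rewrite wsumB wsum_cst e_mass mulr1.
by rewrite wsumB wsum_cst d_mass mulr1.
Qed.

(* Chebyshev's sum identity: Cov(f, g) = 1/2 E[(f X - f Y)(g X - g Y)] for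
   independent copies X, Y; discordant pairs thus give negative covariance. *)
Lemma wsum_mul_le (T : eqType) (d : seq (rT * T)) f g :
  is_law d ->
  (forall x y, x \in d -> y \in d -> 0 < x.1 -> 0 < y.1 ->
     (f x.2 - f y.2) * (g x.2 - g y.2) <= 0) ->
  wsum d (fun t => f t * g t) <= wsum d f * wsum d g.
Proof.
move=> [d_ge0 d_mass] discordant.
have sym : \sum_(x <- d) \sum_(y <- d) x.1 * y.1 * ((f x.2 - f y.2) * (g x.2 - g y.2))
    = 2 * \sum_(x <- d) \sum_(y <- d) x.1 * y.1 * (f x.2 * g x.2 - f x.2 * g y.2).
  rewrite mulr_natl mulr2n [X in _ = _ + X]exchange_big /= -big_split.
  by apply: eq_bigr => x _; rewrite -big_split; apply: eq_bigr => y _ /=; ring.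
have cross : \sum_(x <- d) \sum_(y <- d) x.1 * y.1 * (f x.2 * g x.2 - f x.2 * g y.2)
    = wsum d (fun t => f t * g t) * wsum d (fun=> 1) - wsum d f * wsum d g.
  rewrite /wsum !big_distrlr -sumrB; apply: eq_bigr => x _.
  by rewrite -sumrB; apply: eq_bigr => y _ /=; ring.
have : \sum_(x <- d) \sum_(y <- d) x.1 * y.1 * ((f x.2 - f y.2) * (g x.2 - g y.2)) <= 0.
  rewrite big_seq; apply: sumr_le0 => x xd; rewrite big_seq; apply: sumr_le0 => y yd.
  have [x_pos|/(weight_eq0 (d_ge0 x xd)) ->] := ltrP 0 x.1; last by rewrite !mul0r.
  have [y_pos|/(weight_eq0 (d_ge0 y yd)) ->] := ltrP 0 y.1; last by rewrite mulr0 mul0r.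
  by rewrite pmulr_rle0 ?mulr_gt0 // discordant.
by rewrite sym cross d_mass mulr1; lra.
Qed.

End FiniteLaws.

Section Trees.
Variables (rT : realType) (R : nat).
Local Notation tree := (rtree rT R).
Local Notation law := (seq (rT * outcome R)).
Implicit Types (t l r b : tree) (s : nat -> nat * nat * rT) (d e : law).

Lemma Prob_le_Expect d (E : pred (outcome R)) (X : outcome R -> rT) :
  (forall x, x \in d -> 0 <= x.1) -> (forall x, 0 <= X x) -> (forall x, E x -> 1 <= X x) ->
  Prob d E <= Expect d X.
Proof.
move=> d_ge0 X_ge0 E_X; rewrite /Prob /Expect big_mkcond /= big_seq [X in _ <= X]big_seq.
apply: ler_sum => x xd; case: ifP => [/E_X|_]; last by rewrite mulr_ge0 ?d_ge0.
by move=> one_le; rewrite ler_peMr ?d_ge0.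
Qed.

Definition outcome_add (x y : outcome R) : outcome R := [ffun i => (x i + y i)%N].

Definition prod_law d e : law :=
  [seq (x.1 * y.1, outcome_add x.2 y.2) | x <- d, y <- e].

Definition splits s n : seq (rT * (nat * nat)) :=
  let: (a, b, q) := s n in
  [:: (q, (minn a n, n - minn a n)%N); (1 - q, (minn b n, n - minn b n)%N)].

Lemma dist_node s l r n :
  dist (RNode s l r) n =
  wbind (splits s n) (fun ac => prod_law (dist l ac.1) (dist r ac.2)).
Proof.
rewrite /= /wbind /prod_law /splits; case: (s n) => [[a b] q] /=; rewrite cats0 !map_allpairs.
by congr (_ ++ _); apply: eq_allpairs => x y; rewrite mulrA.
Qed.

Lemma splits_sum s n u : u \in splits s n -> (u.2.1 + u.2.2)%N = n.
Proof.
rewrite /splits; case: (s n) => [[a b] q].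
by rewrite !inE => /orP[] /eqP -> /=; rewrite subnKC // geq_minr.
Qed.

Lemma splits_mass s n : wsum (splits s n) (fun=> 1) = 1.
Proof.
by rewrite /splits; case: (s n) => [[a b] q]; rewrite /wsum !big_cons big_nil /=; ring.
Qed.

Lemma splits_law s n : 0 <= (s n).2 <= 1 -> is_law (splits s n).
Proof.
move=> q01; split; last exact: splits_mass.
move: q01; rewrite /splits; case: (s n) => [[a b] q] /= /andP[q_ge0 q_le1] u.
by rewrite !inE => /orP[] /eqP -> /=; rewrite ?subr_ge0.
Qed.

Lemma wsum_prod_law d e X (phi psi : outcome R -> rT) :
  (forall x y, x \in d -> y \in e -> X (outcome_add x.2 y.2) = phi x.2 * psi y.2) ->
  wsum (prod_law d e) X = wsum d phi * wsum e psi.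
Proof.
move=> X_fac; rewrite /wsum /prod_law big_allpairs_dep /= mulr_suml.
apply: eq_big_seq => x xd; rewrite mulr_sumr; apply: eq_big_seq => y ye /=.
by rewrite X_fac //; ring.
Qed.

Lemma Expect_node s l r n X (phi psi : outcome R -> rT) :
  (forall x y a c, x \in dist l a -> y \in dist r c ->
     X (outcome_add x.2 y.2) = phi x.2 * psi y.2) ->
  Expect (dist (RNode s l r) n) X =
  wsum (splits s n) (fun ac => Expect (dist l ac.1) phi * Expect (dist r ac.2) psi).
Proof.
move=> X_fac; rewrite ExpectE dist_node wsum_bind.
by apply: eq_wsum => ac; apply: wsum_prod_law => x y; apply: X_fac.
Qed.

Lemma mem_dist_node s l r n z : z \in dist (RNode s l r) n ->
  exists2 u, u \in splits s n & exists x y,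
    [/\ x \in dist l u.2.1, y \in dist r u.2.2 & z = (u.1 * (x.1 * y.1), outcome_add x.2 y.2)].
Proof.
rewrite dist_node => /mem_wbind[u us [v /allpairsPdep[x [y [xd yd ->]]] ->]].
by exists u => //; exists x, y.
Qed.

Lemma dist_node_mem s l r n u x y :
  u \in splits s n -> x \in dist l u.2.1 -> y \in dist r u.2.2 ->
  (u.1 * (x.1 * y.1), outcome_add x.2 y.2) \in dist (RNode s l r) n.
Proof.
move=> us xd yd; rewrite dist_node.
by apply: (wbind_mem (y := (_, _)) us); apply/allpairsPdep; exists x, y.
Qed.

Lemma dist_mass t n : wsum (dist t n) (fun=> 1) = 1.
Proof.
elim: t n => [j|s l IHl r IHr] n; first by rewrite /wsum big_seq1 mulr1.
rewrite -ExpectE (@Expect_node _ _ _ _ _ (fun=> 1) (fun=> 1)) ?mulr1 //.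
by under eq_wsum => ac do rewrite !ExpectE IHl IHr mulr1; apply: splits_mass.
Qed.

Lemma dist_law t n : rules_ok t -> is_law (dist t n).
Proof.
move=> ok; split; last exact: dist_mass.
elim: t n ok => [j|s l IHl r IHr] n /=; first by move=> _ x; rewrite inE => /eqP ->.
move=> [q01 [okl okr]] z /mem_dist_node[u us [x [y [xd yd ->]]]] /=.
by rewrite !mulr_ge0 ?(IHl _ okl x xd) ?(IHr _ okr y yd) ?(splits_law (q01 n)).1.
Qed.

Lemma dist_supp t n x j : x \in dist t n -> j \notin leaves t -> x.2 j = 0%N.
Proof.
elim: t n x => [j0|s l IHl r IHr] n z /=.
  by rewrite inE => /eqP -> /=; rewrite inE ffunE => /negPf ->.
case/mem_dist_node=> u _ [x [y [xd yd ->]]].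
by rewrite mem_cat negb_or ffunE => /andP[/(IHl _ _ xd) -> /(IHr _ _ yd) ->].
Qed.

Lemma dist_total t n x : x \in dist t n -> (\sum_j x.2 j)%N = n.
Proof.
elim: t n x => [j0|s l IHl r IHr] n z /=.
  rewrite inE => /eqP -> /=; rewrite (bigD1 j0) //= ffunE eqxx big1 ?addn0 //.
  by move=> i /negPf; rewrite ffunE => ->.
case/mem_dist_node=> u us [x [y [xd yd ->]]] /=.
under eq_bigr do rewrite ffunE.
by rewrite big_split /= (IHl _ _ xd) (IHr _ _ yd) (splits_sum us).
Qed.

Lemma Nnode_add b x y : Nnode b (outcome_add x y) = (Nnode b x + Nnode b y)%N.
Proof. by rewrite /Nnode -big_split /=; apply: eq_bigr => i _; rewrite ffunE. Qed.

Lemma Nnode_eq0 b (x : outcome R) : {in leaves b, forall j, x j = 0%N} -> Nnode b x = 0%N.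
Proof. by move=> x0; rewrite /Nnode big_seq big1 // => j /x0. Qed.

Lemma Nnode_dist t n x : uniq (leaves t) -> x \in dist t n -> Nnode t x.2 = n.
Proof.
move=> uniq_t xd; rewrite -(dist_total xd) /Nnode big_uniq //=.
rewrite [RHS](bigID (mem (leaves t))) /= [X in (_ + X)%N]big1 ?addn0 //.
by move=> j; apply: dist_supp xd.
Qed.

Lemma subtrees_self t : List.In t (subtrees t).
Proof. by case: t => [j|s l r]; left. Qed.

Lemma subtrees_nodel s l r b : List.In b (subtrees l) -> List.In b (subtrees (RNode s l r)).
Proof. by move=> bl; right; apply: List.in_or_app; left. Qed.

Lemma subtrees_noder s l r b : List.In b (subtrees r) -> List.In b (subtrees (RNode s l r)).
Proof. by move=> br; right; apply: List.in_or_app; right. Qed.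

Lemma leaves_subtrees t b : List.In b (subtrees t) -> {subset leaves b <= leaves t}.
Proof.
elim: t => [j|s l IHl r IHr] /=; first by case=> // <-.
case=> [<- //|b_lr]; case: (List.in_app_or _ _ _ b_lr) => [bl|br] j jb; rewrite mem_cat.
  by rewrite (IHl bl j jb).
by rewrite (IHr br j jb) orbT.
Qed.

Lemma leaf_subtrees t j : j \in leaves t -> List.In (RLeaf j) (subtrees t).
Proof.
elim: t => [j0|s l IHl r IHr] /=; first by rewrite inE => /eqP ->; left.
by rewrite mem_cat => /orP[/IHl/subtrees_nodel|/IHr/subtrees_noder]; apply.
Qed.

Definition counts_near (F : tree -> nat) t n :=
  forall x, x \in dist t n -> 0 < x.1 ->
  forall b, List.In b (subtrees t) -> (F b <= Nnode b x.2 <= (F b).+1)%N.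

Lemma counts_near_root F t n :
  uniq (leaves t) -> counts_near F t n -> (F t <= n <= (F t).+1)%N.
Proof.
move=> uniq_t near; have [x xd x_pos] := has_pos_weight (dist_mass t n).
by rewrite -(Nnode_dist uniq_t xd); apply: near x xd x_pos t (subtrees_self t).
Qed.

Lemma counts_near_children F s l r n u :
  uniq (leaves l ++ leaves r) -> counts_near F (RNode s l r) n ->
  u \in splits s n -> 0 < u.1 -> counts_near F l u.2.1 /\ counts_near F r u.2.2.
Proof.
rewrite cat_uniq => /and3P[_ /hasPn disj _] near us u_pos.
have [x0 x0d x0_pos] := has_pos_weight (dist_mass l u.2.1).
have [y0 y0d y0_pos] := has_pos_weight (dist_mass r u.2.2).
have near_xy x y : x \in dist l u.2.1 -> y \in dist r u.2.2 -> 0 < x.1 -> 0 < y.1 ->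
    forall b, List.In b (subtrees (RNode s l r)) ->
    (F b <= Nnode b x.2 + Nnode b y.2 <= (F b).+1)%N.
  move=> xd yd x_pos y_pos b bt; rewrite -Nnode_add.
  by apply: near (dist_node_mem us xd yd) _ b bt; rewrite !mulr_gt0.
split=> [x xd x_pos b bl | y yd y_pos b br].
  have := near_xy x y0 xd y0d x_pos y0_pos b (subtrees_nodel s r bl).
  rewrite (@Nnode_eq0 b y0.2) ?addn0 // => j /(leaves_subtrees bl) jl.
  by apply: dist_supp y0d _; apply: contraTN jl; apply: disj.
have := near_xy x0 y x0d yd x0_pos y_pos b (subtrees_noder s l br).
rewrite (@Nnode_eq0 b x0.2) ?add0n // => j /(leaves_subtrees br) jr.
exact: dist_supp x0d (disj j jr).
Qed.

Lemma counts_near_bind F s l r (nu : seq (rT * nat)) v :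
  uniq (leaves l ++ leaves r) -> (forall x, x \in nu -> 0 <= x.1) ->
  (forall x, x \in nu -> 0 < x.1 -> counts_near F (RNode s l r) x.2) ->
  v \in wbind nu (splits s) -> 0 < v.1 ->
  [/\ counts_near F l v.2.1, counts_near F r v.2.2
    & (F (RNode s l r) <= v.2.1 + v.2.2 <= (F (RNode s l r)).+1)%N].
Proof.
move=> uniq_lr nu_ge0 near vb v_pos.
have [x [x_nu x_pos] [u [us u_pos] ->]] := mem_wbind_pos nu_ge0 vb v_pos.
have [nl nr] := counts_near_children uniq_lr (near x x_nu x_pos) us u_pos.
by rewrite (splits_sum us); split => //; apply: counts_near_root (near x x_nu x_pos).
Qed.

End Trees.

Section Pgf.
Variables (rT : realType) (R : nat).
Local Notation tree := (rtree rT R).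
Implicit Types (t l r : tree) (s : nat -> nat * nat * rT).

Variables (w : 'I_R -> rT) (sg : rT) (F : tree -> nat).
Hypothesis w_ge0 : forall i, 0 <= w i.
Hypothesis sg_neq0 : sg != 0.
Hypothesis sg_w : forall i, 0 <= sg * (w i - 1).

Definition pgf t n := Expect (dist t n) (fun x : outcome R => \prod_i w i ^+ x i).

Lemma pgf_ge0 t n : rules_ok t -> 0 <= pgf t n.
Proof.
move=> ok; rewrite /pgf ExpectE.
apply: wsum_ge0_pos => [x|x _ _]; first exact: (dist_law n ok).1.
by apply: prodr_ge0 => i _; rewrite exprn_ge0.
Qed.

Lemma pgf_leaf j n : pgf (RLeaf j) n = w j ^+ n.
Proof.
rewrite /pgf ExpectE /wsum big_seq1 mul1r (bigD1 j) //= ffunE eqxx big1 ?mulr1 //.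
by move=> i /negPf; rewrite ffunE => ->.
Qed.

Lemma pgf_node s l r n :
  pgf (RNode s l r) n = wsum (splits s n) (fun ac => pgf l ac.1 * pgf r ac.2).
Proof.
apply: Expect_node => x y _ _ _ _.
by rewrite -big_split /=; apply: eq_bigr => i _; rewrite ffunE exprD.
Qed.

Lemma pgf_step t n : rules_ok t -> uniq (leaves t) ->
  counts_near F t n -> counts_near F t n.+1 -> 0 <= sg * (pgf t n.+1 - pgf t n).
Proof.
elim: t n => [j|s l IHl r IHr] n ok uniq_t near0 near1.
  have -> : sg * (pgf (RLeaf j) n.+1 - pgf (RLeaf j) n) = w j ^+ n * (sg * (w j - 1)).
    by rewrite !pgf_leaf exprS; ring.
  by rewrite mulr_ge0 ?exprn_ge0.
have [q01 [okl okr]] := ok.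
have [ul ur] : uniq (leaves l) /\ uniq (leaves r).
  by move: uniq_t; rewrite /= cat_uniq => /and3P[].
rewrite !pgf_node -wsum_subE ?splits_mass // -wsumZ.
apply: wsum_ge0_pos => [v|v vs v_pos]; first exact: (splits_law (q01 _)).1.
rewrite -wsumZ; apply: wsum_ge0_pos => [u|u us u_pos]; first exact: (splits_law (q01 _)).1.
have [nl1 nr1] := counts_near_children uniq_t near1 vs v_pos.
have [nl0 nr0] := counts_near_children uniq_t near0 us u_pos.
move: (splits_sum vs) (splits_sum us) (counts_near_root ul nl1) (counts_near_root ul nl0)
  (counts_near_root ur nr1) (counts_near_root ur nr0).
case: v {vs v_pos} nl1 nr1 => [? [a1 c1]]; case: u {us u_pos} nl0 nr0 => [? [a0 c0]] /=.
move=> nl0 nr0 nl1 nr1 sum1 sum0 range_l1 range_l0 range_r1 range_r0.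
have : (a1 = a0 /\ c1 = c0.+1) \/ (a1 = a0.+1 /\ c1 = c0) by lia.
case=> -[? ?]; subst a1 c1.
  have -> : sg * (pgf l a0 * pgf r c0.+1 - pgf l a0 * pgf r c0) =
      pgf l a0 * (sg * (pgf r c0.+1 - pgf r c0)) by ring.
  by rewrite mulr_ge0 ?pgf_ge0 // (IHr _ okr ur nr0 nr1).
have -> : sg * (pgf l a0.+1 * pgf r c0 - pgf l a0 * pgf r c0) =
    pgf r c0 * (sg * (pgf l a0.+1 - pgf l a0)) by ring.
by rewrite mulr_ge0 ?pgf_ge0 // (IHl _ okl ul nl0 nl1).
Qed.

(* Two splits whose totals differ by at most one are discordant: the left
   count cannot increase while the right count increases too. *)
Lemma pgf_discordant l r (S a a' c c' : nat) :
  rules_ok l -> rules_ok r -> uniq (leaves l) -> uniq (leaves r) ->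
  counts_near F l a -> counts_near F l a' -> counts_near F r c -> counts_near F r c' ->
  (S <= a + c <= S.+1)%N -> (S <= a' + c' <= S.+1)%N ->
  (pgf l a - pgf l a') * (pgf r c - pgf r c') <= 0.
Proof.
move=> okl okr ul ur na na' nc nc' sum sum'.
have [->|neq_a] := eqVneq a a'; first by rewrite subrr mul0r.
have [->|neq_c] := eqVneq c c'; first by rewrite subrr mulr0.
have comono k m : counts_near F l k -> counts_near F l k.+1 ->
    counts_near F r m -> counts_near F r m.+1 ->
    0 <= (pgf l k.+1 - pgf l k) * (pgf r m.+1 - pgf r m).
  move=> nk nk1 nm nm1; have := mulr_ge0 (pgf_step okl ul nk nk1) (pgf_step okr ur nm nm1).
  by rewrite mulrACA -expr2 pmulr_rge0 // exprn_even_gt0 //= sg_neq0.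
move: (counts_near_root ul na) (counts_near_root ul na') (counts_near_root ur nc)
  (counts_near_root ur nc') => ra ra' rc rc'.
have : (a = F l /\ a' = (F l).+1 /\ c = (F r).+1 /\ c' = F r) \/
       (a = (F l).+1 /\ a' = F l /\ c = F r /\ c' = (F r).+1).
  by move: neq_a neq_c => /eqP neq_a /eqP neq_c; lia.
case=> -[? [? [? ?]]]; subst a a' c c'.
  by rewrite -opprB mulNr oppr_le0 comono.
by rewrite -[pgf r _ - _]opprB mulrN oppr_le0 comono.
Qed.

Definition bernoulli_pgf (z : rT) (k : nat) (p : rT) := z ^+ k * (1 - p + p * z).

Lemma expr_two_point (z : rT) (k n : nat) :
  (k <= n <= k.+1)%N -> z ^+ n = bernoulli_pgf z k (n%:R - k%:R).
Proof.
rewrite /bernoulli_pgf => kn; have [->|->] : n = k \/ n = k.+1 by lia.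
  by rewrite subrr; ring.
by rewrite -natr1 exprS; ring.
Qed.

Lemma wsum_bernoulli_pgf (T : Type) (d : seq (rT * T)) (z : rT) k f :
  wsum d (fun=> 1) = 1 ->
  wsum d (fun v => bernoulli_pgf z k (f v)) = bernoulli_pgf z k (wsum d f).
Proof.
move=> mass1; rewrite /bernoulli_pgf.
rewrite (eq_wsum _ (g := fun v => z ^+ k - z ^+ k * (1 - z) * f v)) => [|v]; last by ring.
by rewrite wsumB wsum_cst mass1 mulr1 wsumZ; ring.
Qed.

Definition mean_count t n j := Expect (dist t n) (fun x : outcome R => (x j)%:R : rT).

Lemma mean_count_leaf j n : mean_count (RLeaf j) n j = n%:R.
Proof. by rewrite /mean_count ExpectE /wsum big_seq1 mul1r ffunE eqxx. Qed.

Lemma mean_count_nodel s l r (nu : seq (rT * nat)) j : j \notin leaves r ->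
  wsum nu (fun n => mean_count (RNode s l r) n j) =
  wsum (wmap fst (wbind nu (splits s))) (fun a => mean_count l a j).
Proof.
move=> jr; rewrite wsum_map wsum_bind; apply: eq_wsum => n; rewrite /mean_count.
rewrite (Expect_node _ _ (phi := fun x : outcome R => (x j)%:R) (psi := fun=> 1)).
  by apply: eq_wsum => ac; rewrite [Expect _ (fun=> 1)]ExpectE dist_mass mulr1.
by move=> x y _ c _ yd; rewrite ffunE (dist_supp yd jr) addn0 mulr1.
Qed.

Lemma mean_count_noder s l r (nu : seq (rT * nat)) j : j \notin leaves l ->
  wsum nu (fun n => mean_count (RNode s l r) n j) =
  wsum (wmap snd (wbind nu (splits s))) (fun c => mean_count r c j).
Proof.
move=> jl; rewrite wsum_map wsum_bind; apply: eq_wsum => n; rewrite /mean_count.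
rewrite (Expect_node _ _ (phi := fun=> 1) (psi := fun x : outcome R => (x j)%:R)).
  by apply: eq_wsum => ac; rewrite [Expect _ (fun=> 1)]ExpectE dist_mass mul1r.
by move=> x y a _ xd _; rewrite ffunE (dist_supp xd jl) add0n mul1r.
Qed.

Lemma pgf_leaf_law j (nu : seq (rT * nat)) : is_law nu ->
  (forall v, v \in nu -> 0 < v.1 -> counts_near F (RLeaf j) v.2) ->
  wsum nu (pgf (RLeaf j)) = bernoulli_pgf (w j) (F (RLeaf j))
    (wsum nu (fun n => mean_count (RLeaf j) n j) - (F (RLeaf j))%:R).
Proof.
move=> [nu_ge0 nu_mass] near.
have -> : wsum nu (fun n => mean_count (RLeaf j) n j) - (F (RLeaf j))%:R =
    wsum nu (fun n => n%:R - (F (RLeaf j))%:R).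
  by rewrite wsumB wsum_cst nu_mass mulr1 (eq_wsum _ (mean_count_leaf j)).
rewrite -wsum_bernoulli_pgf //; apply: eq_wsum_pos => // v v_nu v_pos.
by rewrite pgf_leaf; apply: expr_two_point; apply: counts_near_root (near v v_nu v_pos).
Qed.

Lemma pgf_node_law s l r (nu : seq (rT * nat)) :
  wsum nu (pgf (RNode s l r)) = wsum (wbind nu (splits s)) (fun ac => pgf l ac.1 * pgf r ac.2).
Proof. by rewrite wsum_bind; apply: eq_wsum => n; rewrite pgf_node. Qed.

(* The induction needs an arbitrary law [nu] of admissible particle counts at
   the root; at a node, [wbind nu (splits s)] is the joint law of the counts
   of the two children. *)
Lemma pgf_le_bernoulli_prod t (nu : seq (rT * nat)) :
  rules_ok t -> uniq (leaves t) -> is_law nu ->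
  (forall v, v \in nu -> 0 < v.1 -> counts_near F t v.2) ->
  wsum nu (pgf t) <= \prod_(j <- leaves t)
    bernoulli_pgf (w j) (F (RLeaf j))
                  (wsum nu (fun n => mean_count t n j) - (F (RLeaf j))%:R).
Proof.
elim: t nu => [j|s l IHl r IHr] nu ok uniq_t nu_law near.
  by rewrite big_seq1 pgf_leaf_law.
have [q01 [okl okr]] := ok; have [nu_ge0 _] := nu_law; have uniq_lr := uniq_t.
move: uniq_t; rewrite /= cat_uniq => /and3P[ul /hasPn disj ur].
have bs_law : is_law (wbind nu (splits s)).
  by apply: is_law_bind => // v _; apply: splits_law.
have bs_near := counts_near_bind uniq_lr nu_ge0 near.
rewrite pgf_node_law big_cat /=.
under eq_big_seq => j jl do rewrite (mean_count_nodel s l nu (contraTN (disj j) jl)).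
under [X in _ <= _ * X]eq_big_seq => j jr do rewrite (mean_count_noder s r nu (disj j jr)).
apply: le_trans (wsum_mul_le bs_law _) _.
  move=> v v' vb v'b v_pos v'_pos.
  have [nl nr sum] := bs_near v vb v_pos; have [nl' nr' sum'] := bs_near v' v'b v'_pos.
  exact: pgf_discordant okl okr ul ur nl nl' nr nr' sum sum'.
have marginal_law (T : eqType) (h : nat * nat -> T) := is_law_map h bs_law.
rewrite -!wsum_map; apply: ler_pM.
- by apply: wsum_ge0_pos => [|v _ _]; [exact: (marginal_law _ fst).1 | exact: pgf_ge0].
- by apply: wsum_ge0_pos => [|v _ _]; [exact: (marginal_law _ snd).1 | exact: pgf_ge0].
- apply: IHl => // v /mapP[u ub ->] u_pos.
  by have [] := bs_near u ub u_pos.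
- apply: IHr => // v /mapP[u ub ->] u_pos.
  by have [] := bs_near u ub u_pos.
Qed.

End Pgf.

Section Resampling.
Variables (rT : realType) (R : nat) (pi : 'I_R -> rT) (N : nat) (t : rtree rT R).
Hypothesis pi_ge0 : forall j, 0 <= pi j.
Hypothesis pi_sum1 : \sum_j pi j = 1.
Hypothesis resampling : tree_resampling N pi t.

Let F (b : rtree rT R) : nat := Num.truncn (mu N pi b).

Let mu_ge0 b : 0 <= mu N pi b.
Proof. by rewrite /mu mulr_ge0 // sumr_ge0. Qed.

Let floor_mu b : Num.floor (mu N pi b) = (F b)%:Z.
Proof.
by rewrite /F truncn_floor mu_ge0 gez0_abs // floor_ge0 mu_ge0.
Qed.

Let leaves_perm : perm_eq (leaves t) (enum 'I_R).
Proof. by case: resampling. Qed.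

Let rules_ok_t : rules_ok t.
Proof. by case: resampling. Qed.

Let uniq_leaves : uniq (leaves t).
Proof. by rewrite (perm_uniq leaves_perm) enum_uniq. Qed.

Let prod_leaves (f : 'I_R -> rT) : \prod_(j <- leaves t) f j = \prod_j f j.
Proof. by rewrite (perm_big _ leaves_perm) big_enum. Qed.

Let near_root : counts_near F t N.
Proof.
case: resampling => _ _ near x xd x_pos b bt; have [/(_ x xd x_pos) + _] := near b bt.
by rewrite floor_mu => /orP[] /eqP; lia.
Qed.

Let mean_count_root j : mean_count t N j = N%:R * pi j.
Proof.
case: resampling => perm _ near.
have jt : j \in leaves t by rewrite (perm_mem perm) mem_enum.
have [_] := near _ (leaf_subtrees jt); rewrite /mu big_seq1 => <-.
by apply: eq_bigr => x _; rewrite /Nnode big_seq1.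
Qed.

Let frac_bounds j : 0 <= N%:R * pi j - (F (RLeaf j))%:R <= 1.
Proof.
have := truncn_itv (mu_ge0 (RLeaf j)); rewrite -/(F (RLeaf j)) /mu big_seq1.
by rewrite -natr1 => /andP[lo hi]; apply/andP; split; lra.
Qed.

Lemma pgf_resampling_le (w : 'I_R -> rT) (sg : rT) :
  (forall i, 0 <= w i) -> sg != 0 -> (forall i, 0 <= sg * (w i - 1)) ->
  pgf w t N <= \prod_j bernoulli_pgf (w j) (F (RLeaf j)) (N%:R * pi j - (F (RLeaf j))%:R).
Proof.
move=> w_ge0 sg_neq0 sg_w; have root_law : is_law [:: (1 : rT, N)].
  by split=> [x /[!inE] /eqP ->|]; rewrite /wsum ?big_seq1 ?mulr1.
have near1 v : v \in [:: (1 : rT, N)] -> 0 < v.1 -> counts_near F t v.2.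
  by move=> /[!inE] /eqP ->.
move: (pgf_le_bernoulli_prod w_ge0 sg_neq0 sg_w rules_ok_t uniq_leaves root_law near1).
rewrite prod_leaves.
under [X in _ <= X]eq_bigr => j _ do rewrite /wsum big_seq1 mul1r mean_count_root.
by rewrite /wsum big_seq1 mul1r.
Qed.

Definition deviation (B : {set 'I_R}) (x : outcome R) : rT :=
  \sum_(j in B) ((x j)%:R - N%:R * pi j).

Definition mgf (B : {set 'I_R}) (l : rT) :=
  Expect (dist t N) (fun x => expR (l * deviation B x)).

Lemma mgf_le (B : {set 'I_R}) (l : rT) : mgf B l <= expR (#|B|%:R * (l ^+ 2 / 8)).
Proof.
pose w j := if j \in B then expR l else 1.
pose sg : rT := if 0 <= l then 1 else -1.
have w_ge0 j : 0 <= w j by rewrite /w; case: ifP => // _; apply: expR_ge0.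
have sg_neq0 : sg != 0 by rewrite /sg; case: ifP => _; rewrite ?oppr_eq0 oner_eq0.
have sg_w j : 0 <= sg * (w j - 1).
  rewrite /sg /w; case: (j \in B); last by rewrite subrr mulr0.
  have [l_ge0|l_lt0] := lerP 0 l; first by rewrite mul1r subr_ge0 -expR0 ler_expR.
  by rewrite mulN1r oppr_ge0 subr_le0 expR_le1 ltW.
pose C := \prod_(j in B) expR (- (l * (N%:R * pi j))).
have mgfE : mgf B l = C * pgf w t N.
  rewrite /mgf /pgf !ExpectE -wsumZ; apply: eq_wsum => x.
  rewrite /deviation mulr_sumr expR_sum /C [\prod_i _](bigID (mem B)) /=.
  rewrite [X in _ * (_ * X)]big1 => [|i /negPf iB]; last by rewrite /w iB expr1n.
  rewrite mulr1 -big_split /=; apply: eq_bigr => j jB.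
  by rewrite /w jB mulrBr expRD expRM_natr mulrC.
have C_ge0 : 0 <= C by apply: prodr_ge0 => j _; apply: expR_ge0.
rewrite mgfE; apply: le_trans (ler_wpM2l C_ge0 (pgf_resampling_le w_ge0 sg_neq0 sg_w)) _.
rewrite (bigID (mem B)) /= [X in C * (_ * X)]big1 => [|j /negPf jB]; last first.
  by rewrite /w jB /bernoulli_pgf expr1n mul1r mulr1 subrK.
rewrite mulr1 /C -big_split /= expRM_natl -prodr_const.
apply: ler_prod => j jB; rewrite /w jB; have /andP[P_ge0 P_le1] := frac_bounds j.
rewrite /bernoulli_pgf -expRM_natl [expR _ * (_ * _)]mulrA -expRD.
have -> : - (l * (N%:R * pi j)) + (F (RLeaf j))%:R * l =
    - ((N%:R * pi j - (F (RLeaf j))%:R) * l) by ring.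
rewrite mulr_ge0 ?expR_ge0 ?hoeffding_bernoulli ?P_ge0 //=.
by have := expR_ge0 l; nra.
Qed.

Lemma deviation_setC (B : {set 'I_R}) x :
  x \in dist t N -> deviation (~: B) x.2 = - deviation B x.2.
Proof.
move=> xd; rewrite /deviation (eq_bigl (fun j => j \notin B)) => [|j]; last first.
  by rewrite in_setC.
have : \sum_j ((x.2 j)%:R - N%:R * pi j) = 0 :> rT.
  by rewrite sumrB -natr_sum (dist_total xd) -mulr_sumr pi_sum1 mulr1 subrr.
by rewrite (bigID (mem B)) /= addrC => /eqP; rewrite addr_eq0 => /eqP.
Qed.

Lemma mgf_setC (B : {set 'I_R}) l : mgf B l = mgf (~: B) (- l).
Proof.
rewrite /mgf !ExpectE.
apply: eq_wsum_pos => [x|x xd _]; first exact: (dist_law N rules_ok_t).1.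
by rewrite deviation_setC // mulrNN.
Qed.

Lemma mgf_le_half (B : {set 'I_R}) l : mgf B l <= expR (R%:R * l ^+ 2 / 16).
Proof.
have mgf_small (A : {set 'I_R}) k : (#|A| * 2 <= R)%N ->
    mgf A k <= expR (R%:R * k ^+ 2 / 16).
  move=> A_small; apply: le_trans (mgf_le A k) _; rewrite ler_expR -subr_ge0.
  have -> : R%:R * k ^+ 2 / 16 - #|A|%:R * (k ^+ 2 / 8) =
      (R%:R - #|A|%:R * 2) * k ^+ 2 / 16 :> rT by field.
  by rewrite divr_ge0 ?ler0n // mulr_ge0 ?sqr_ge0 // subr_ge0 -natrM ler_nat.
have [B_small|B_large] := leqP (#|B| * 2) R; first exact: mgf_small.
rewrite mgf_setC -[l ^+ 2]sqrrN; apply: mgf_small.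
by have := cardsC B; rewrite card_ord; lia.
Qed.

Lemma deviation_tail (B : {set 'I_R}) eps : 0 < eps -> (0 < R)%N ->
  Prob (dist t N) (fun x => eps <= `|deviation B x|) <= 2 * expR (- (4 * eps ^+ 2 / R%:R)).
Proof.
move=> eps_gt0 R_gt0; have R_pos : 0 < R%:R :> rT by rewrite ltr0n.
pose l := 8 * eps / R%:R.
have l_ge0 : 0 <= l by rewrite /l divr_ge0 ?mulr_ge0 ?ltW.
pose X x := expR (- (l * eps)) * (expR (l * deviation B x) + expR (- l * deviation B x)).
apply: (@le_trans _ _ (Expect (dist t N) X)).
  apply: Prob_le_Expect => [x|x|x eps_le]; first exact: (dist_law N rules_ok_t).1.
    by rewrite mulr_ge0 ?addr_ge0 ?expR_ge0.
  have one_le : 1 <= expR (- (l * eps)) * expR (l * `|deviation B x|).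
    by rewrite -expRD -expR0 ler_expR addrC -mulrBr mulr_ge0 // subr_ge0.
  apply: le_trans one_le _; rewrite ler_wpM2l ?expR_ge0 //.
  have [/ger0_norm ->|/ltr0_norm ->] := lerP 0 (deviation B x).
    by rewrite lerDl expR_ge0.
  by rewrite mulrN -mulNr lerDr expR_ge0.
rewrite /X ExpectE wsumZ wsumD -!ExpectE -/(mgf B l) -/(mgf B (- l)).
apply: le_trans (ler_wpM2l (expR_ge0 _) (lerD (mgf_le_half B l) (mgf_le_half B (- l)))) _.
rewrite sqrrN -mulr2n mulrnAr -expRD [2 * _]mulr_natl.
have -> : - (l * eps) + R%:R * l ^+ 2 / 16 = - (4 * eps ^+ 2 / R%:R).
  by rewrite /l; field; rewrite gt_eqF.
by [].
Qed.

End Resampling.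

Theorem lemma5 (rT : realType) (R : nat) (pi : 'I_R -> rT) (N : nat)
  (t : rtree rT R) :
  (forall j, 0 <= pi j) -> \sum_j pi j = 1 ->
  tree_resampling N pi t ->
  forall eps : rT, 0 < eps ->
  forall A : {set 'I_R},
    Prob (dist t N)
      (fun x : outcome R => eps <= `|\sum_(j in A) ((x j)%:R - N%:R * pi j)|)
    <= 2 * expR (- (4 * eps ^+ 2 / R%:R)).
Proof.
move=> pi_ge0 pi_sum1 resampling eps eps_gt0 A.
have R_gt0 : (0 < R)%N.
  have [R0|//] := posnP R; move: pi_sum1; rewrite big1 => [/eqP|j _].
    by rewrite eq_sym oner_eq0.
  by have := ltn_ord j; rewrite [X in (_ < X)%N]R0.
exact: deviation_tail pi_ge0 pi_sum1 resampling A eps eps_gt0 R_gt0.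
Qed.
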